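(* Let $(\pi,\sigma)$ be a commutant pair of projective unitary representations of a countable group $G$ on a Hilbert space $H$ such that the set $\mathcal{B}_\pi$ of Bessel vectors of $\pi$ is dense in $H$. Let $\xi_i,\eta_i\in H$ ($i=1,\dots,k$) be Bessel vectors for $\pi$, and $\vec\xi=(\xi_1,\dots,\xi_k)$, $\vec\eta=(\eta_1,\dots,\eta_k)$. If $[\Theta_{\vec\xi,\pi}(H)]=[\Theta_{\vec\eta,\pi}(H)]$, then $[\sigma^{(k)}(G)\vec\xi\,]=[\sigma^{(k)}(G)\vec\eta\,]$.
   Context: A projective unitary representation of $G$ on $H$ is a map $g\mapsto\pi(g)$ into unitaries with $\pi(g)\pi(h)=\mu(g,h)\pi(gh)$, $\mu:G\times G\to\mathbb{T}$. $\xi$ is a Bessel vector for $\pi$ if $\{\pi(g)\xi\}_{g\in G}$ is a Bessel sequence. $(\pi,\sigma)$ is a commutant pair if $\pi(G)'=\sigma(G)''$. For $\xi\in H$, $\Theta_{\xi,\pi}(x)=\sum_{g}\langle x,\pi(g)\xi\rangle\chi_g\in\ell^2(G)$, and $\Theta_{\vec\xi,\pi}(x)=\Theta_{\xi_1,\pi}(x)\oplus\cdots\oplus\Theta_{\xi_k,\pi}(x)\in\ell^2(G)^{(k)}$. $\sigma^{(k)}(g)=\sigma(g)\oplus\cdots\oplus\sigma(g)$ acts on $H^{(k)}$, the direct sum of $k$ copies of $H$. $[K]$ denotes the closed linear span of $K$. *)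

From HB Require Import structures.
From mathcomp Require Import all_boot all_order all_algebra.
From mathcomp Require Import reals.
From mathcomp Require Import complex.
Set Implicit Arguments. Unset Strict Implicit. Unset Printing Implicit Defensive.
Import Order.TTheory GRing.Theory Num.Theory.
Local Open Scope ring_scope.

Section HilbertDefs.
Variable R : realType.
Local Notation C := R[i].
Variable V : lmodType C.
(* inner product, linear in the FIRST argument, conjugate-linear in the second *)
Variable ip : V -> V -> C.

Definition nsq (x : V) : R := complex.Re (ip x x).

Definition is_hilbert_space : Prop :=
  [/\ (forall (a : C) (x y z : V), ip (a *: x + y) z = a * ip x z + ip y z),
      (forall x y : V, ip x y = (ip y x)^*),
      (forall x : V, 0 <= ip x x),
      (forall x : V, ip x x = 0 -> x = 0) &
      (forall u : nat -> V,
         (forall e : R, 0 < e -> exists N : nat, forall m n : nat,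
             (N <= m)%N -> (N <= n)%N -> nsq (u m - u n) < e) ->
         exists l : V, forall e : R, 0 < e -> exists N : nat, forall n : nat,
             (N <= n)%N -> nsq (u n - l) < e)].

Definition is_linear_op (T : V -> V) : Prop :=
  forall (a : C) (x y : V), T (a *: x + y) = a *: T x + T y.

Definition bounded_op (T : V -> V) : Prop :=
  is_linear_op T /\ exists M : R, forall x : V, nsq (T x) <= M * nsq x.

Definition unitary (U : V -> V) : Prop :=
  [/\ is_linear_op U, (forall x y : V, ip (U x) (U y) = ip x y) &
      (forall y : V, exists x : V, U x = y)].

Definition commutant (S : (V -> V) -> Prop) (T : V -> V) : Prop :=
  bounded_op T /\ forall A : V -> V, S A -> forall x : V, T (A x) = A (T x).

Variable G : groupType.

Definition range_op (pi : G -> V -> V) (A : V -> V) : Prop := exists g : G, A = pi g.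

Definition proj_unitary_rep (pi : G -> V -> V) : Prop :=
  (forall g : G, unitary (pi g)) /\
  exists mu : G -> G -> C, (forall g h : G, `|mu g h| = 1) /\
    forall (g h : G) (x : V), pi g (pi h x) = mu g h *: pi (g * h)%g x.

Definition commutant_pair (pi sigma : G -> V -> V) : Prop :=
  forall T : V -> V,
    commutant (range_op pi) T <-> commutant (commutant (range_op sigma)) T.

(* xi is a Bessel vector: {pi(g) xi}_g is a Bessel sequence, i.e.
   sum_g |<x, pi(g) xi>|^2 <= B ||x||^2 (sum over all finite subsets of G) *)
Definition bessel_vec (pi : G -> V -> V) (xi : V) : Prop :=
  exists B : R, forall (x : V) (s : seq G), uniq s ->
    \sum_(g <- s) Normc.normc (ip x (pi g xi)) ^+ 2 <= B * nsq x.

Definition bessel_dense (pi : G -> V -> V) : Prop :=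
  forall (x : V) (e : R), 0 < e -> exists xi : V, bessel_vec pi xi /\ nsq (x - xi) < e.

(* Theta_{xi,pi}(x) = sum_g <x, pi(g) xi> chi_g, as a function G -> C *)
Definition Theta (pi : G -> V -> V) (xi : V) (x : V) : G -> C :=
  fun g => ip x (pi g xi).

Definition Thetak (k : nat) (pi : G -> V -> V) (xi : 'I_k -> V) (x : V) : 'I_k -> G -> C :=
  fun i => Theta pi (xi i) x.

Definition l2k (k : nat) (y : 'I_k -> G -> C) : Prop :=
  exists B : R, forall s : seq G, uniq s ->
    \sum_(i < k) \sum_(g <- s) Normc.normc (y i g) ^+ 2 <= B.

Definition l2k_closed_span (k : nat) (S : ('I_k -> G -> C) -> Prop)
    (y : 'I_k -> G -> C) : Prop :=
  l2k y /\
  forall e : R, 0 < e -> exists (n : nat) (c : 'I_n -> C) (f : 'I_n -> 'I_k -> G -> C),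
    (forall j, S (f j)) /\
    forall s : seq G, uniq s ->
      \sum_(i < k) \sum_(g <- s) Normc.normc (y i g - \sum_(j < n) c j * f j i g) ^+ 2 <= e.

Definition Hk_closed_span (k : nat) (S : ('I_k -> V) -> Prop) (y : 'I_k -> V) : Prop :=
  forall e : R, 0 < e -> exists (n : nat) (c : 'I_n -> C) (f : 'I_n -> 'I_k -> V),
    (forall j, S (f j)) /\
    \sum_(i < k) nsq (y i - \sum_(j < n) c j *: f j i) <= e.

Definition Theta_range (k : nat) (pi : G -> V -> V) (xi : 'I_k -> V)
    (f : 'I_k -> G -> C) : Prop := exists x : V, f = Thetak pi xi x.

Definition orbitk (k : nat) (sigma : G -> V -> V) (xi : 'I_k -> V) (v : 'I_k -> V) : Prop :=
  exists g : G, v = (fun i => sigma g (xi i)).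

End HilbertDefs.

(* Let K be the closed span of sigma^(k)(G) xi in H^k and P the orthogonal projection
   onto K.  P commutes with the diagonal action of sigma, so its operator entries lie in
   sigma(G)', and every T in pi(G)' = sigma(G)'' maps K into itself coordinatewise.  For
   Bessel vectors a, b the operator T_ab x = sum_g <x, pi(g) a> pi(g) b lies in pi(G)', so
   the residual Y = eta - P eta satisfies sum_i <T_ab xi_i, Y_i> = 0.  This expression is
   a pairing of Theta_xi(a) against coefficients that depend on b and Y only and are
   square-summable; by density of the Bessel vectors it vanishes on Theta_xi(H), hence on
   its closed span, which contains Theta_eta(H).  So sum_i <T_ab eta_i, Y_i> = 0 and then
   sum_i <T_aa Y_i, Y_i> = 0, which dominates sum_i |<Y_i, a>|^2.  Thus Y is orthogonal to
   the dense set of Bessel vectors, Y = 0, eta lies in K and [sigma^(k)(G) eta] is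
   contained in [sigma^(k)(G) xi]; the other inclusion is symmetric. *)

From Pilot Require Import Defs.
From HB Require Import structures.
From mathcomp Require Import all_boot all_order all_algebra.
From mathcomp Require Import reals complex.
From mathcomp Require Import ring lra.
From Stdlib Require Import IndefiniteDescription FunctionalExtensionality ClassicalEpsilon.
Import Order.TTheory GRing.Theory Num.Theory.
Local Open Scope ring_scope.
Set Implicit Arguments. Unset Strict Implicit. Unset Printing Implicit Defensive.

Local Notation normc := Normc.normc.
Local Notation "x %:C" := (real_complex _ x) (at level 1, format "x %:C").

Section ComplexModulus.
Variable R : realType.
Implicit Types (z w : R[i]) (r : R).

Lemma normc_normr z : (normc z)%:C = `|z|.
Proof. by case: z => a b; rewrite normc_def. Qed.

Lemma normc_ge0 z : 0 <= normc z.
Proof. by case: z => a b; rewrite /Normc.normc sqrtr_ge0. Qed.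

Lemma normc_conj z : normc z^* = normc z.
Proof. by apply: complexI; rewrite !normc_normr norm_conjC. Qed.

Lemma normc_sqr z : ((normc z) ^+ 2)%:C = z * z^*.
Proof. by rewrite rmorphXn /= normc_normr normCK. Qed.

Lemma normc_real r : normc r%:C = `|r|.
Proof. by apply: complexI; rewrite normc_normr normc_def /= expr0n addr0 sqrtr_sqr. Qed.

Lemma normc_nat n : normc n%:R = n%:R :> R.
Proof. by rewrite -(rmorph_nat (real_complex R)) normc_real normr_nat. Qed.

Lemma Re_le_normc z : complex.Re z <= normc z.
Proof.
case: z => a b /=; apply: le_trans (ler_norm a) _.
by rewrite -sqrtr_sqr; apply: ler_wsqrtr; rewrite lerDl sqr_ge0.
Qed.

Lemma normc_sum (I : Type) (s : seq I) (f : I -> R[i]) :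
  normc (\sum_(i <- s) f i) <= \sum_(i <- s) normc (f i).
Proof.
elim: s => [|a s IH]; first by rewrite !big_nil Normc.normc0.
by rewrite !big_cons; apply: le_trans (le_normcD _ _) _; rewrite lerD2l.
Qed.

Lemma normc_le0_eq0 z : (forall e, 0 < e -> normc z <= e) -> z = 0.
Proof.
move=> h; apply: Normc.eq0_normc; apply/eqP; rewrite eq_le normc_ge0 andbT.
by apply/ler_addgt0Pr => e e0; rewrite add0r h.
Qed.

Lemma normc1_neq0 z : normc z = 1 -> z != 0.
Proof. by move=> h; apply: contra_eqN h => /eqP ->; rewrite Normc.normc0 eq_sym oner_eq0. Qed.

Lemma normc1_invJ z : normc z = 1 -> (z^-1)^* = z.
Proof.
move=> h; have zJz : z * z^* = 1 by rewrite -normc_sqr h expr1n.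
have zJ : z^* = z^-1 by rewrite -[z^*]mul1r -(mulVf (normc1_neq0 h)) -mulrA zJz mulr1.
by rewrite -zJ conjCK.
Qed.

Lemma complex_realJ r : (r%:C)^* = r%:C.
Proof. by apply: conj_Creal; rewrite complex_real. Qed.

Lemma ReD z w : complex.Re (z + w) = complex.Re z + complex.Re w.
Proof. by case: z; case: w. Qed.

Lemma ReN z : complex.Re (- z) = - complex.Re z.
Proof. by case: z. Qed.

Lemma Re_sum (I : Type) (s : seq I) (F : I -> R[i]) :
  complex.Re (\sum_(i <- s) F i) = \sum_(i <- s) complex.Re (F i).
Proof.
elim: s => [|x s IH]; first by rewrite !big_nil.
by rewrite !big_cons ReD IH.
Qed.

Lemma ReJ z : complex.Re z^* = complex.Re z.
Proof. by apply: complexI; rewrite !complexRe Re_conj. Qed.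

Lemma ge0_complexRe z : 0 <= z -> z = (complex.Re z)%:C.
Proof. by case: z => a b; rewrite lecE /= => /andP [/eqP -> _]. Qed.

End ComplexModulus.

Lemma exists_invSn_lt (R : realType) (e : R) : 0 < e -> exists N : nat, N.+1%:R^-1 < e.
Proof.
move=> e0; have ie : 0 < e^-1 by rewrite invr_gt0.
have := archi_boundP (ltW ie).
set N := Num.Def.archi_bound _ => hN.
exists N; rewrite invf_plt ?posrE ?ltr0Sn //.
by apply: lt_le_trans hN _; rewrite ler_nat.
Qed.

Lemma invSn_gt0 (R : realType) (n : nat) : 0 < n.+1%:R^-1 :> R.
Proof. by rewrite invr_gt0 ltr0Sn. Qed.

Lemma invSn_le1 (R : realType) (n : nat) : n.+1%:R^-1 <= 1 :> R.
Proof. by rewrite invf_le1 ?ltr0Sn // ler1n. Qed.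

Lemma invSn_le (R : realType) (m n : nat) : (m <= n)%N -> n.+1%:R^-1 <= m.+1%:R^-1 :> R.
Proof. by move=> mn; rewrite lef_pV2 ?posrE ?ltr0Sn // ler_nat ltnS. Qed.

Lemma weighted_amgm (R : realType) (a b t : R) :
  0 < t -> 2 * (a * b) <= t * a ^+ 2 + b ^+ 2 / t.
Proof.
move=> t0; have h := sqr_ge0 (t * a - b).
have -> : t * a ^+ 2 + b ^+ 2 / t = (t ^+ 2 * a ^+ 2 + b ^+ 2) / t.
  by field; rewrite lt0r_neq0.
by rewrite ler_pdivlMr //; nra.
Qed.

Lemma bounded_sup_approx (R : realType) (E : R -> Prop) (x0 M : R) :
  E x0 -> (forall x, E x -> x <= M) ->
  exists s, (forall x, E x -> x <= s) /\ (forall e, 0 < e -> exists2 x, E x & s - e < x).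
Proof.
move=> Ex0 EM; have supE : classical_sets.has_sup E by split; [exists x0 | exists M].
exists (reals.sup E); split; first by move=> x Ex; apply: reals.sup_upper_bound.
by move=> e e0; have [x Ex lt] := reals.sup_adherent e0 supE; exists x.
Qed.

Section InnerProduct.
Variable R : realType.
Variable W : lmodType R[i].
Variable ip : W -> W -> R[i].
Hypothesis hH : is_hilbert_space ip.
Local Notation nsq := (nsq ip).
Implicit Types (x y z : W) (a : R[i]).

Lemma ip_linear a x y z : ip (a *: x + y) z = a * ip x z + ip y z.
Proof. by case: hH. Qed.

Lemma ip_conj x y : ip x y = (ip y x)^*.
Proof. by case: hH. Qed.

Lemma ip_complete (u : nat -> W) :
  (forall e : R, 0 < e -> exists N : nat, forall m n : nat,
     (N <= m)%N -> (N <= n)%N -> nsq (u m - u n) < e) ->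
  exists l : W, forall e : R, 0 < e -> exists N : nat, forall n : nat,
     (N <= n)%N -> nsq (u n - l) < e.
Proof. by case: hH => _ _ _ _; apply. Qed.

Lemma ipDl x y z : ip (x + y) z = ip x z + ip y z.
Proof. by rewrite -[x]scale1r ip_linear mul1r scale1r. Qed.

Lemma ip0l z : ip 0 z = 0.
Proof. by apply: (@addrI _ (ip 0 z)); rewrite addr0 -ipDl addr0. Qed.

Lemma ipZl a x z : ip (a *: x) z = a * ip x z.
Proof. by rewrite -[a *: x]addr0 ip_linear ip0l addr0. Qed.

Lemma ipNl x z : ip (- x) z = - ip x z.
Proof. by rewrite -scaleN1r ipZl mulN1r. Qed.

Lemma ipBl x y z : ip (x - y) z = ip x z - ip y z.
Proof. by rewrite ipDl ipNl. Qed.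

Lemma ip_suml (I : Type) (s : seq I) (f : I -> W) z :
  ip (\sum_(i <- s) f i) z = \sum_(i <- s) ip (f i) z.
Proof.
elim: s => [|a s IH]; first by rewrite !big_nil ip0l.
by rewrite !big_cons ipDl IH.
Qed.

Lemma ipDr x y z : ip z (x + y) = ip z x + ip z y.
Proof. by rewrite ip_conj ipDl rmorphD /= -!ip_conj. Qed.

Lemma ip0r z : ip z 0 = 0.
Proof. by rewrite ip_conj ip0l conjC0. Qed.

Lemma ipZr a x z : ip z (a *: x) = a^* * ip z x.
Proof. by rewrite ip_conj ipZl rmorphM /= -ip_conj. Qed.

Lemma ipBr x y z : ip z (x - y) = ip z x - ip z y.
Proof. by rewrite ip_conj ipBl rmorphB /= -ip_conj -[X in _ - X]ip_conj. Qed.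

Lemma ipNr x z : ip z (- x) = - ip z x.
Proof. by rewrite -sub0r ipBr ip0r sub0r. Qed.

Lemma ip_sumr (I : Type) (s : seq I) (f : I -> W) z :
  ip z (\sum_(i <- s) f i) = \sum_(i <- s) ip z (f i).
Proof.
elim: s => [|a s IH]; first by rewrite !big_nil ip0r.
by rewrite !big_cons ipDr IH.
Qed.

Lemma ip_eq0 x : ip x x = 0 -> x = 0.
Proof. by case: hH => _ _ _ /(_ x). Qed.

Lemma ip_ge0 x : 0 <= ip x x.
Proof. by case: hH => _ _ /(_ x). Qed.

Lemma ipxx x : ip x x = (nsq x)%:C.
Proof. exact/ge0_complexRe/ip_ge0. Qed.

Lemma nsq_ge0 x : 0 <= nsq x.
Proof. by have := ip_ge0 x; rewrite ipxx lecR. Qed.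

Lemma nsq0 : nsq 0 = 0.
Proof. by rewrite /Defs.nsq ip0l. Qed.

Lemma nsq_eq0 x : nsq x = 0 -> x = 0.
Proof. by move=> h; apply: ip_eq0; rewrite ipxx h. Qed.

Lemma nsqZ a x : nsq (a *: x) = normc a ^+ 2 * nsq x.
Proof. by rewrite /Defs.nsq ipZl ipZr mulrA -normc_sqr ipxx -rmorphM. Qed.

Lemma nsqN x : nsq (- x) = nsq x.
Proof. by rewrite -scaleN1r nsqZ normcN Normc.normc1 expr1n mul1r. Qed.

Lemma nsqD x y : nsq (x + y) = nsq x + nsq y + 2 * complex.Re (ip x y).
Proof. by rewrite /Defs.nsq ipDl !ipDr !ReD [ip y x]ip_conj ReJ; ring. Qed.

Lemma nsqB x y : nsq (x - y) = nsq x + nsq y - 2 * complex.Re (ip x y).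
Proof. by rewrite nsqD nsqN ipNr ReN; ring. Qed.

Lemma nsqD_le x y : nsq (x + y) <= 2 * nsq x + 2 * nsq y.
Proof. by have := nsq_ge0 (x - y); rewrite nsqB nsqD; lra. Qed.

Lemma parallelogram x y : nsq (x - y) + nsq (x + y) = 2 * nsq x + 2 * nsq y.
Proof. by rewrite nsqB nsqD; ring. Qed.

(* Expand [0 <= nsq (x - c / nsq y *: y)] with [c = ip x y]. *)
Lemma CauchySchwarz x y : normc (ip x y) ^+ 2 <= nsq x * nsq y.
Proof.
have [y0|y_neq0] := eqVneq (nsq y) 0.
  by rewrite y0 (nsq_eq0 y0) ip0r Normc.normc0 expr0n mulr0.
have ny : 0 < nsq y by rewrite lt_def y_neq0 nsq_ge0.
set c := ip x y; set n := nsq y.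
have h := nsq_ge0 (x - (c * (n^-1)%:C) *: y).
have ni : 0 <= n^-1 by rewrite invr_ge0 ltW.
rewrite nsqB nsqZ ipZr rmorphM /= complex_realJ Normc.normcM normc_real (ger0_norm ni) -/n -/c in h.
have e : c^* * (n^-1)%:C * c = ((normc c ^+ 2) * n^-1)%:C.
  by rewrite rmorphM /= normc_sqr mulrC mulrA.
have nyi : 0 < n^-1 by rewrite invr_gt0.
rewrite e /= in h; rewrite -subr_ge0 -(pmulr_rge0 _ nyi).
have -> : n^-1 * (nsq x * n - normc c ^+ 2) =
          nsq x + (normc c * n^-1) ^+ 2 * n - 2 * (normc c ^+ 2 * n^-1).
  by rewrite exprMn; field; rewrite lt0r_neq0.
exact: h.
Qed.

Definition ipnorm x : R := Num.sqrt (nsq x).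

Lemma ipnorm_ge0 x : 0 <= ipnorm x.
Proof. exact: sqrtr_ge0. Qed.

Lemma ipnorm_sqr x : ipnorm x ^+ 2 = nsq x.
Proof. by rewrite sqr_sqrtr // nsq_ge0. Qed.

Lemma ipnorm_le x (d : R) : 0 <= d -> nsq x <= d ^+ 2 -> ipnorm x <= d.
Proof. by move=> d0 h; rewrite -(ler_pXn2r (_ : 0 < 2)%N) ?nnegrE ?ipnorm_ge0 // ipnorm_sqr. Qed.

Lemma nsq_le x (d : R) : ipnorm x <= d -> nsq x <= d ^+ 2.
Proof.
move=> h; rewrite -ipnorm_sqr ler_pXn2r ?nnegrE ?ipnorm_ge0 //.
exact: le_trans (ipnorm_ge0 x) h.
Qed.

Lemma ipnorm_eq0 x : ipnorm x = 0 -> x = 0.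
Proof. by move=> h; apply: nsq_eq0; rewrite -ipnorm_sqr h expr0n. Qed.

Lemma normc_ip_le x y : normc (ip x y) <= ipnorm x * ipnorm y.
Proof.
rewrite -(ler_pXn2r (_ : 0 < 2)%N) ?nnegrE ?normc_ge0 ?mulr_ge0 ?ipnorm_ge0 //.
by rewrite exprMn !ipnorm_sqr CauchySchwarz.
Qed.

Lemma ipnormD_le x y : ipnorm (x + y) <= ipnorm x + ipnorm y.
Proof.
apply: ipnorm_le; first by rewrite addr_ge0 ?ipnorm_ge0.
rewrite nsqD sqrrD !ipnorm_sqr.
by have := le_trans (Re_le_normc (ip x y)) (normc_ip_le x y); lra.
Qed.

Lemma ipnormN x : ipnorm (- x) = ipnorm x.
Proof. by rewrite /ipnorm nsqN. Qed.

Lemma ipnormB_le x y z : ipnorm (x - z) <= ipnorm (x - y) + ipnorm (y - z).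
Proof. by have := ipnormD_le (x - y) (y - z); rewrite addrA subrK. Qed.

Lemma ipnormZ a x : ipnorm (a *: x) = normc a * ipnorm x.
Proof. by rewrite /ipnorm nsqZ sqrtrM ?sqr_ge0 // sqrtr_sqr ger0_norm ?normc_ge0. Qed.

End InnerProduct.

Section LinearOp.
Variables (R : realType) (W : lmodType R[i]) (L : W -> W).
Hypothesis Llin : is_linear_op L.

Lemma linear_op0 : L 0 = 0.
Proof.
have h := Llin 1 0 0; rewrite scaler0 addr0 scale1r in h.
by apply: (@addrI _ (L 0)); rewrite addr0 -h.
Qed.

Lemma linear_opD x y : L (x + y) = L x + L y.
Proof. by rewrite -{1}[x]scale1r Llin scale1r. Qed.

Lemma linear_opZ a x : L (a *: x) = a *: L x.
Proof. by rewrite -[a *: x]addr0 Llin linear_op0 addr0. Qed.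

Lemma linear_opB x y : L (x - y) = L x - L y.
Proof. by rewrite linear_opD -scaleN1r linear_opZ scaleN1r. Qed.

Lemma linear_op_sum (I : Type) (r : seq I) (f : I -> W) :
  L (\sum_(i <- r) f i) = \sum_(i <- r) L (f i).
Proof.
elim: r => [|a r IH]; first by rewrite !big_nil linear_op0.
by rewrite !big_cons linear_opD IH.
Qed.

End LinearOp.

Section Span.
Variables (R : realType) (W : lmodType R[i]) (ip : W -> W -> R[i]).
Hypothesis hH : is_hilbert_space ip.
Local Notation nsq := (nsq ip).
Local Notation ipnorm := (ipnorm ip).

Definition lspan (S : W -> Prop) (u : W) : Prop :=
  exists s : seq (R[i] * W), (forall p, p \in s -> S p.2) /\ u = \sum_(p <- s) p.1 *: p.2.

Definition cspan (S : W -> Prop) (y : W) : Prop :=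
  forall e : R, 0 < e -> exists u, lspan S u /\ nsq (y - u) <= e.

Variable S : W -> Prop.

Lemma lspan0 : lspan S 0.
Proof. by exists [::]; rewrite big_nil. Qed.

Lemma lspan_mem v : S v -> lspan S v.
Proof.
move=> Sv; exists [:: (1, v)]; split; last by rewrite big_seq1 scale1r.
by move=> p; rewrite inE => /eqP ->.
Qed.

Lemma lspanD u v : lspan S u -> lspan S v -> lspan S (u + v).
Proof.
move=> [s [hs ->]] [t [ht ->]]; exists (s ++ t); split; last by rewrite big_cat.
by move=> p; rewrite mem_cat => /orP [/hs|/ht].
Qed.

Lemma lspanZ a u : lspan S u -> lspan S (a *: u).
Proof.
move=> [s [hs ->]]; exists [seq (a * p.1, p.2) | p <- s]; split.
  by move=> p /mapP [q qs ->]; exact: (hs q qs).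
by rewrite scaler_sumr big_map; apply: eq_bigr => p _; rewrite scalerA.
Qed.

Lemma lspan_sum (I : Type) (r : seq I) (F : I -> W) :
  (forall i, lspan S (F i)) -> lspan S (\sum_(i <- r) F i).
Proof.
move=> h; elim: r => [|i r IH]; first by rewrite big_nil; exact: lspan0.
by rewrite big_cons; apply: lspanD.
Qed.

Lemma cspan_hnormP y :
  cspan S y <-> forall d : R, 0 < d -> exists u, lspan S u /\ ipnorm (y - u) <= d.
Proof.
split=> h d d0.
  have [u [su hu]] := h (d ^+ 2) (exprn_gt0 2 d0).
  by exists u; split => //; apply: (ipnorm_le hH) => //; apply: ltW.
have sd : 0 < Num.sqrt d by rewrite sqrtr_gt0.
have [u [su hu]] := h _ sd.
by exists u; split => //; have := nsq_le hH hu; rewrite sqr_sqrtr // ltW.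
Qed.

Lemma lspan_cspan u : lspan S u -> cspan S u.
Proof. by move=> su e e0; exists u; split => //; rewrite subrr (nsq0 hH) ltW. Qed.

Lemma cspan0 : cspan S 0.
Proof. exact/lspan_cspan/lspan0. Qed.

Lemma cspan_mem v : S v -> cspan S v.
Proof. by move=> Sv; apply/lspan_cspan/lspan_mem. Qed.

Lemma cspanD y1 y2 : cspan S y1 -> cspan S y2 -> cspan S (y1 + y2).
Proof.
move=> /cspan_hnormP h1 /cspan_hnormP h2; apply/cspan_hnormP => d d0.
have d2 : 0 < d / 2 by rewrite divr_gt0.
have [u1 [s1 n1]] := h1 _ d2; have [u2 [s2 n2]] := h2 _ d2.
exists (u1 + u2); split; first exact: lspanD.
rewrite opprD addrACA; apply: le_trans (ipnormD_le hH _ _) _; lra.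
Qed.

Lemma cspanZ a y : cspan S y -> cspan S (a *: y).
Proof.
move=> /cspan_hnormP h; apply/cspan_hnormP => d d0.
have a1 : 0 < normc a + 1 by have := normc_ge0 a; lra.
have [u [su nu]] := h (d / (normc a + 1)) (divr_gt0 d0 a1).
exists (a *: u); split; first exact: lspanZ.
rewrite -scalerBr (ipnormZ hH); apply: le_trans (ler_wpM2l (normc_ge0 a) nu) _.
by rewrite mulrA ler_pdivrMr //; have := normc_ge0 a; nra.
Qed.

Lemma cspanB y1 y2 : cspan S y1 -> cspan S y2 -> cspan S (y1 - y2).
Proof. by move=> h1 h2; apply: cspanD => //; rewrite -scaleN1r; apply: cspanZ. Qed.

Lemma orth_lspan z : (forall v, S v -> ip z v = 0) -> forall u, lspan S u -> ip z u = 0.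
Proof.
move=> h u [s [hs ->]]; rewrite (ip_sumr hH); apply: big1_seq => p /hs Sp.
by rewrite (ipZr hH) h // mulr0.
Qed.

Lemma orth_cspan z : (forall v, S v -> ip z v = 0) -> forall y, cspan S y -> ip z y = 0.
Proof.
move=> h y /cspan_hnormP hy; apply: normc_le0_eq0 => e e0.
have z1 : 0 < ipnorm z + 1 by have := ipnorm_ge0 ip z; lra.
have [u [su nu]] := hy (e / (ipnorm z + 1)) (divr_gt0 e0 z1).
rewrite -[y](subrK u) (ipDr hH) (orth_lspan h su) addr0.
apply: le_trans (normc_ip_le hH _ _) _; apply: le_trans (ler_wpM2l (ipnorm_ge0 ip z) nu) _.
by rewrite mulrA ler_pdivrMr //; have := ipnorm_ge0 ip z; nra.
Qed.

Lemma cspan_linear_image (L : W -> W) : is_linear_op L ->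
  (forall x, nsq (L x) <= nsq x) -> (forall v, S v -> lspan S (L v)) ->
  forall y, cspan S y -> cspan S (L y).
Proof.
move=> Llin Lc LS y hy e e0; have [u [[s [hs ->]] hu]] := hy e e0.
exists (L (\sum_(p <- s) p.1 *: p.2)); split; last first.
  by rewrite -(linear_opB Llin); apply: le_trans (Lc _) hu.
rewrite (linear_op_sum Llin); clear hu; elim: s hs => [|p s IH] hs.
  by rewrite big_nil; exact: lspan0.
rewrite big_cons (linear_opZ Llin); apply: lspanD.
  by apply/lspanZ/LS/hs; rewrite mem_head.
by apply: IH => q qs; apply: hs; rewrite inE qs orbT.
Qed.

End Span.

Section SpanMonotone.
Variables (R : realType) (W : lmodType R[i]) (ip : W -> W -> R[i]).
Hypothesis hH : is_hilbert_space ip.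
Local Notation cspan := (cspan ip).

Lemma lspan_sub_cspan (S S' : W -> Prop) :
  (forall v, S v -> cspan S' v) -> forall u, lspan S u -> cspan S' u.
Proof.
move=> hS u [s [hs ->]]; elim: s hs => [|p s IH] hs.
  by rewrite big_nil; exact: (cspan0 hH).
rewrite big_cons; apply: (cspanD hH).
  by apply: (cspanZ hH); apply: hS; apply: hs; rewrite mem_head.
by apply: IH => q qs; apply: hs; rewrite inE qs orbT.
Qed.

Lemma cspan_sub (S S' : W -> Prop) :
  (forall v, S v -> cspan S' v) -> forall y, cspan S y -> cspan S' y.
Proof.
move=> hS y /(cspan_hnormP hH) hy; apply/(cspan_hnormP hH) => d d0.
have d2 : 0 < d / 2 by rewrite divr_gt0.
have [u [su nu]] := hy _ d2.
have /(cspan_hnormP hH) /(_ _ d2) [u' [su' nu']] := lspan_sub_cspan hS su.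
by exists u'; split => //; apply: le_trans (ipnormB_le hH _ u _) _; lra.
Qed.

End SpanMonotone.

Section Projection.
Variables (R : realType) (W : lmodType R[i]) (ip : W -> W -> R[i]).
Hypothesis hH : is_hilbert_space ip.
Local Notation nsq := (nsq ip).
Local Notation ipnorm := (ipnorm ip).
Local Notation cspan := (cspan ip).

(* Test minimality with [l = t * ip w v], [t = 1 / (nsq v + 1)]. *)
Lemma orth_of_min w v : (forall l : R[i], nsq w <= nsq (w - l *: v)) -> ip w v = 0.
Proof.
move=> h; set a := ip w v; set t : R := (nsq v + 1)^-1.
have nv := nsq_ge0 hH v.
have t0 : 0 < t by rewrite invr_gt0; lra.
have := h (t%:C * a); rewrite (nsqB hH) (nsqZ hH) (ipZr hH) rmorphM /= complex_realJ.
rewrite Normc.normcM normc_real (gtr0_norm t0).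
have -> : t%:C * a^* * a = (t * normc a ^+ 2)%:C by rewrite rmorphM /= normc_sqr; ring.
rewrite /= exprMn => hle.
have htv : t * nsq v <= 1 by rewrite /t mulrC ler_pdivrMr; lra.
have ha : normc a ^+ 2 <= 0.
  have hna := sqr_ge0 (normc a).
  have : t * (2 * normc a ^+ 2) <= t * (normc a ^+ 2) by nra.
  by rewrite ler_pM2l //; lra.
have : normc a ^+ 2 = 0 by apply/eqP; rewrite eq_le ha sqr_ge0.
by move/eqP; rewrite sqrf_eq0 => /eqP /Normc.eq0_normc.
Qed.

Variables (S : W -> Prop) (z : W).

Lemma lspan_dist_inf : exists2 D, 0 <= D &
  (forall u, lspan S u -> D <= ipnorm (z - u)) /\
  (forall e, 0 < e -> exists2 u, lspan S u & ipnorm (z - u) < D + e).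
Proof.
pose E r := exists2 u, lspan S u & r = - ipnorm (z - u).
have E0 : E (- ipnorm z) by exists 0; [exact: lspan0 | rewrite subr0].
have EM r : E r -> r <= 0 by case=> u _ ->; rewrite oppr_le0 ipnorm_ge0.
have [s [sub sad]] := bounded_sup_approx E0 EM.
have Dapprox e : 0 < e -> exists2 u, lspan S u & ipnorm (z - u) < - s + e.
  by move=> e0; have [r [u su ->] lt] := sad e e0; exists u => //; lra.
exists (- s); last by split=> // u su; rewrite lerNl; apply: sub; exists u.
apply/ler_addgt0Pr => e e0; have [u _ hu] := Dapprox e e0.
by have := ipnorm_ge0 ip (z - u); lra.
Qed.

Section NearMinimizers.
Variable D : R.
Hypothesis D0 : 0 <= D.
Hypothesis Dle : forall u, lspan S u -> D <= ipnorm (z - u).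

(* Parallelogram law at [z - u1], [z - u2]; their midpoint is again in the span. *)
Lemma near_min_close u1 u2 (e1 e2 : R) : 0 < e1 <= 1 -> 0 < e2 <= 1 ->
  lspan S u1 -> ipnorm (z - u1) < D + e1 -> lspan S u2 -> ipnorm (z - u2) < D + e2 ->
  nsq (u2 - u1) <= (4 * D + 2) * (e1 + e2).
Proof.
move=> /andP [e10 e11] /andP [e20 e21] s1 h1 s2 h2.
set mid := (2^-1 : R[i]) *: (u1 + u2).
have smid : lspan S mid by apply/lspanZ/lspanD.
have := parallelogram hH (z - u1) (z - u2).
have -> : z - u1 - (z - u2) = u2 - u1 by rewrite opprB addrC addrA subrK.
have -> : z - u1 + (z - u2) = 2 *: (z - mid).
  rewrite scalerBr scalerA mulfV ?pnatr_eq0 // scale1r.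
  by rewrite -[2 : R[i]]/(1 + 1) scalerDl scale1r opprD addrACA.
rewrite (nsqZ hH) normc_nat.
have hmid : D ^+ 2 <= nsq (z - mid).
  by rewrite -(ipnorm_sqr hH) ler_pXn2r ?nnegrE ?ipnorm_ge0 ?Dle.
have ha : nsq (z - u1) <= (D + e1) ^+ 2.
  by rewrite -(ipnorm_sqr hH); have := ipnorm_ge0 ip (z - u1); nra.
have hb : nsq (z - u2) <= (D + e2) ^+ 2.
  by rewrite -(ipnorm_sqr hH); have := ipnorm_ge0 ip (z - u2); nra.
nra.
Qed.

Lemma cspan_dist_ge q : cspan S q -> D <= ipnorm (z - q).
Proof.
move=> /(cspan_hnormP hH) hq; apply/ler_addgt0Pr => d d0.
have [w [sw hw]] := hq d d0.
by have := Dle sw; have := ipnormB_le hH z q w; lra.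
Qed.

Lemma near_min_lim_dist (u : nat -> W) p :
  (forall n, ipnorm (z - u n) < D + n.+1%:R^-1) ->
  (forall e, 0 < e -> exists N, forall n, (N <= n)%N -> nsq (u n - p) < e) ->
  ipnorm (z - p) <= D.
Proof.
move=> hu hp; apply/ler_addgt0Pr => d d0.
have d2 : 0 < d / 2 by rewrite divr_gt0.
have [N1 hN1] := hp _ (exprn_gt0 2 d2).
have [N2 hN2] := exists_invSn_lt d2.
have [n n1 n2] : exists2 n, (N1 <= n)%N & (N2 <= n)%N.
  by exists (maxn N1 N2); rewrite ?leq_maxl ?leq_maxr.
have h1 : ipnorm (u n - p) <= d / 2 by apply: (ipnorm_le hH); rewrite ?ltW // hN1.
have h3 : ipnorm (z - u n) <= D + d / 2.
  by apply/ltW/(lt_le_trans (hu n)); rewrite lerD2l (le_trans (invSn_le R n2)) ?ltW.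
by have := ipnormB_le hH z (u n) p; lra.
Qed.

End NearMinimizers.

Lemma exists_orth_proj : exists p, cspan S p /\ forall v, S v -> ip (z - p) v = 0.
Proof.
have [D D0 [Dle Dapprox]] := lspan_dist_inf.
have hu n : exists u, lspan S u /\ ipnorm (z - u) < D + n.+1%:R^-1.
  by have [u su hu] := Dapprox _ (invSn_gt0 R n); exists u.
pose u n := proj1_sig (constructive_indefinite_description _ (hu n)).
have hun n : lspan S (u n) /\ ipnorm (z - u n) < D + n.+1%:R^-1.
  exact: proj2_sig (constructive_indefinite_description _ (hu n)).
have [p hp] : exists p, forall e, 0 < e ->
    exists N, forall n, (N <= n)%N -> nsq (u n - p) < e.
  apply: (ip_complete hH) => e e0.
  have k0 : 0 < 2 * (4 * D + 2) by lra.
  have [N hN] := exists_invSn_lt (divr_gt0 e0 k0).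
  exists N => m n hm hn; have [sm hm'] := hun m; have [sn hn'] := hun n.
  apply: le_lt_trans (near_min_close D0 Dle _ _ sn hn' sm hm') _;
    rewrite ?invSn_gt0 ?invSn_le1 //.
  have hmn : n.+1%:R^-1 + m.+1%:R^-1 <= 2 * N.+1%:R^-1 :> R.
    by rewrite mulr_natl mulr2n lerD // invSn_le.
  have k0' : 0 <= 4 * D + 2 by lra.
  apply: le_lt_trans (ler_wpM2l k0' hmn) _.
  by rewrite mulrCA mulrA mulrC -ltr_pdivlMr.
have pS : cspan S p.
  move=> e e0; have [N hN] := hp e e0; exists (u N); split; first by case: (hun N).
  by rewrite -(nsqN hH) opprB ltW // hN.
exists p; split => // v Sv; apply: orth_of_min => l.
have pD : ipnorm (z - p) <= D by apply: (near_min_lim_dist (u := u)) => // n; case: (hun n).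
have : D <= ipnorm (z - (p + l *: v)).
  by apply: (cspan_dist_ge Dle); apply: (cspanD hH) => //; apply/(cspanZ hH)/(cspan_mem hH).
rewrite opprD addrA -!(ipnorm_sqr hH) ler_pXn2r ?nnegrE ?ipnorm_ge0 // => hq.
by have := ipnorm_ge0 ip (z - p); lra.
Qed.

End Projection.

Section DirectSum.
Variables (R : realType) (V : lmodType R[i]) (ip : V -> V -> R[i]).
Hypothesis hH : is_hilbert_space ip.
Variable k : nat.
Local Notation Vk := {ffun 'I_k -> V}.

Definition ipk (x y : Vk) : R[i] := \sum_i ip (x i) (y i).

Lemma nsq_ipk (x : Vk) : nsq ipk x = \sum_i nsq ip (x i).
Proof. by rewrite /nsq /ipk Re_sum. Qed.

Lemma nsq_ipk_ge (x : Vk) i : nsq ip (x i) <= nsq ipk x.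
Proof. by rewrite nsq_ipk (bigD1 i) //= lerDl sumr_ge0 // => j _; apply: nsq_ge0. Qed.

(* Componentwise limits, reached simultaneously with tolerance [e / k.+1] each. *)
Lemma ipk_complete (u : nat -> Vk) :
  (forall e : R, 0 < e -> exists N : nat, forall m n : nat,
     (N <= m)%N -> (N <= n)%N -> nsq ipk (u m - u n) < e) ->
  exists l : Vk, forall e : R, 0 < e -> exists N : nat, forall n : nat,
     (N <= n)%N -> nsq ipk (u n - l) < e.
Proof.
move=> hu.
have hc i : exists l : V, forall e : R, 0 < e -> exists N : nat,
    forall n : nat, (N <= n)%N -> nsq ip (u n i - l) < e.
  apply: (ip_complete hH) => e e0; have [N hN] := hu e e0; exists N => m n hm hn.
  apply: le_lt_trans (hN m n hm hn).
  have -> : u m i - u n i = (u m - u n) i by rewrite !ffunE.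
  exact: nsq_ipk_ge.
pose l i := proj1_sig (constructive_indefinite_description _ (hc i)).
have hl i := proj2_sig (constructive_indefinite_description _ (hc i)).
exists [ffun i => l i] => e e0.
have ek : 0 < e / k.+1%:R by rewrite divr_gt0 // ltr0Sn.
pose Ni i := proj1_sig (constructive_indefinite_description _ (hl i _ ek)).
have hNi i := proj2_sig (constructive_indefinite_description _ (hl i _ ek)).
exists (\max_i Ni i) => n hn; rewrite nsq_ipk.
apply: (@le_lt_trans _ _ (\sum_(i < k) e / k.+1%:R)).
  apply: ler_sum => i _; rewrite !ffunE ltW // hNi //.
  by apply: leq_trans hn; apply: leq_bigmax.
rewrite sumr_const card_ord -[_ *+ k]mulr_natr -mulrA gtr_pMr // mulrC.
by rewrite ltr_pdivrMr ?ltr0Sn // mul1r ltr_nat.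
Qed.

Lemma ipk_hilbert : is_hilbert_space ipk.
Proof.
split; last exact: ipk_complete.
- move=> a x y z; rewrite /ipk mulr_sumr -big_split; apply: eq_bigr => i _.
  by rewrite !ffunE ip_linear.
- by move=> x y; rewrite /ipk rmorph_sum; apply: eq_bigr => i _; rewrite ip_conj.
- by move=> x; apply: sumr_ge0 => i _; apply: ip_ge0.
- move=> x hx; apply/ffunP => i; rewrite ffunE; apply: (ip_eq0 hH).
  exact: (psumr_eq0P (fun j _ => ip_ge0 hH (x j)) hx).
Qed.

Definition lift_pred (S : ('I_k -> V) -> Prop) (w : Vk) : Prop := S (fun i => w i).

Lemma Hk_closed_spanE (S : ('I_k -> V) -> Prop) (y : 'I_k -> V) :
  Hk_closed_span ip S y <-> cspan ipk (lift_pred S) [ffun i => y i].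
Proof.
split.
- move=> h e e0; have [n [c [f [hf hs]]]] := h e e0.
  exists (\sum_(j < n) c j *: [ffun i => f j i]); split.
    apply: lspan_sum => j; apply/lspanZ/lspan_mem.
    by rewrite /lift_pred (_ : (fun i => _) = f j) //; apply: functional_extensionality => i; rewrite ffunE.
  rewrite nsq_ipk; apply: le_trans hs; rewrite le_eqVlt; apply/orP; left; apply/eqP.
  apply: eq_bigr => i _; congr (nsq ip _); rewrite !ffunE sum_ffunE; congr (_ - _).
  by apply: eq_bigr => j _; rewrite !ffunE.
- move=> h e e0; have [u [[s [hs ->]] hu]] := h e e0.
  pose x0 : R[i] * Vk := (0, 0).
  exists (size s), (fun j => (nth x0 s j).1), (fun j i => (nth x0 s j).2 i); split.
    by move=> j; apply: (hs (nth x0 s j)); apply: mem_nth.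
  rewrite nsq_ipk in hu; apply: le_trans hu; rewrite le_eqVlt; apply/orP; left; apply/eqP.
  apply: eq_bigr => i _; congr (nsq ip _); rewrite !ffunE sum_ffunE; congr (_ - _).
  by rewrite (big_nth x0) big_mkord; apply: eq_bigr => j _; rewrite !ffunE.
Qed.

End DirectSum.

Lemma big_split_subset (T : eqType) (M : nmodType) (F0 F : seq T) (phi : T -> M) :
  uniq F0 -> uniq F -> {subset F0 <= F} ->
  \sum_(g <- F) phi g = \sum_(g <- F0) phi g + \sum_(g <- [seq g <- F | g \notin F0]) phi g.
Proof.
move=> u0 u sF; rewrite (bigID (mem F0)) /= big_filter; congr (_ + _).
rewrite -big_filter; apply/perm_big/uniq_perm; rewrite ?filter_uniq // => g.
by rewrite mem_filter; case gF0: (g \in F0) => //=; rewrite sF.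
Qed.

Section Nets.
Variables (R : realType) (V : lmodType R[i]) (ip : V -> V -> R[i]).
Hypothesis hH : is_hilbert_space ip.
Local Notation nsq := (nsq ip).
Local Notation ipnorm := (ipnorm ip).
Variable G : eqType.

(* Nets indexed by finite subsets of [G], a finite subset being a duplicate-free list. *)
Definition net_lim (Phi : seq G -> V) (v : V) :=
  forall e : R, 0 < e -> exists F0, uniq F0 /\
    forall F, uniq F -> {subset F0 <= F} -> nsq (Phi F - v) <= e.

Definition net_cauchy (Phi : seq G -> V) :=
  forall e : R, 0 < e -> exists F0, uniq F0 /\
    forall F F', uniq F -> uniq F' -> {subset F0 <= F} -> {subset F0 <= F'} ->
      nsq (Phi F - Phi F') <= e.

Definition net_vanish (phi : seq G -> R[i]) :=
  forall e : R, 0 < e -> exists F0, uniq F0 /\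
    forall F, uniq F -> {subset F0 <= F} -> normc (phi F) <= e.

Lemma exists_uniq_supset (F0 F1 : seq G) :
  exists F, [/\ uniq F, {subset F0 <= F} & {subset F1 <= F}].
Proof.
exists (undup (F0 ++ F1)); split; first exact: undup_uniq.
  by move=> g gF; rewrite mem_undup mem_cat gF.
by move=> g gF; rewrite mem_undup mem_cat gF orbT.
Qed.

Lemma net_lim_unique Phi v w : net_lim Phi v -> net_lim Phi w -> v = w.
Proof.
move=> hv hw; apply/eqP; rewrite -subr_eq0; apply/eqP; apply: (ipnorm_eq0 hH).
apply/eqP; rewrite eq_le ipnorm_ge0 andbT; apply/ler_addgt0Pr => d d0; rewrite add0r.
have d2 : 0 < (d / 2) ^+ 2 by rewrite exprn_gt0 // divr_gt0.
have [F0 [u0 h0]] := hv _ d2; have [F1 [u1 h1]] := hw _ d2.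
have [F [uF s0 s1]] := exists_uniq_supset F0 F1.
have n0 : ipnorm (Phi F - v) <= d / 2 by apply: (ipnorm_le hH); [rewrite divr_ge0 // ltW | exact: h0].
have n1 : ipnorm (Phi F - w) <= d / 2 by apply: (ipnorm_le hH); [rewrite divr_ge0 // ltW | exact: h1].
have n0' : ipnorm (v - Phi F) <= d / 2 by rewrite -(ipnormN hH) opprB.
by have := ipnormB_le hH v (Phi F) w; lra.
Qed.

Lemma net_limDZ Phi Psi v w (a : R[i]) : net_lim Phi v -> net_lim Psi w ->
  net_lim (fun F => a *: Phi F + Psi F) (a *: v + w).
Proof.
move=> hv hw e e0.
have a1 : 0 < normc a + 1 by have := normc_ge0 a; lra.
have se : 0 < Num.sqrt e by rewrite sqrtr_gt0.
set d := Num.sqrt e / 2 / (normc a + 1).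
have d0 : 0 < d by rewrite /d !divr_gt0.
have [F0 [u0 h0]] := hv _ (exprn_gt0 2 d0); have [F1 [u1 h1]] := hw _ (exprn_gt0 2 d0).
have [F' [uF' s0 s1]] := exists_uniq_supset F0 F1.
exists F'; split => // F uF sF.
have n0 : ipnorm (Phi F - v) <= d.
  by apply: (ipnorm_le hH); [exact: ltW | apply: h0 => // g /s0 /sF].
have n1 : ipnorm (Psi F - w) <= d.
  by apply: (ipnorm_le hH); [exact: ltW | apply: h1 => // g /s1 /sF].
have -> : a *: Phi F + Psi F - (a *: v + w) = a *: (Phi F - v) + (Psi F - w).
  by rewrite scalerBr opprD addrACA.
have -> : e = Num.sqrt e ^+ 2 by rewrite sqr_sqrtr // ltW.
apply: (nsq_le hH).
apply: le_trans (ipnormD_le hH _ _) _; rewrite (ipnormZ hH).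
have hd : (normc a + 1) * d = Num.sqrt e / 2 by rewrite /d; field; rewrite lt0r_neq0.
have := ler_wpM2l (normc_ge0 a) n0; have := ipnorm_ge0 ip (Phi F - v); nra.
Qed.

Lemma net_cauchy_lim Phi : net_cauchy Phi -> exists v, net_lim Phi v.
Proof.
move=> hc.
pose F0 n := proj1_sig (constructive_indefinite_description _ (hc _ (invSn_gt0 R n))).
have hF0 n := proj2_sig (constructive_indefinite_description _ (hc _ (invSn_gt0 R n))).
pose H n := undup (flatten (map F0 (iota 0 n.+1))).
have Hu n : uniq (H n) by apply: undup_uniq.
have HF m n : (m <= n)%N -> {subset F0 m <= H n}.
  move=> hmn g gF; rewrite mem_undup; apply/flattenP; exists (F0 m) => //.
  by apply: map_f; rewrite mem_iota add0n ltnS hmn.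
have [v hv] : exists v, forall e : R, 0 < e -> exists N : nat, forall n : nat,
    (N <= n)%N -> nsq (Phi (H n) - v) < e.
  apply: (ip_complete hH) => e e0; have [N hN] := exists_invSn_lt e0.
  exists N => m n hm hn; have [_ h] := hF0 N; apply: le_lt_trans hN.
  by apply: h => //; apply: HF.
exists v => e e0.
have e4 : 0 < e / 4 by rewrite divr_gt0.
have [N1 hN1] := exists_invSn_lt e4; have [N2 hN2] := hv _ e4.
have [n n1 n2] : exists2 n, (N1 <= n)%N & (N2 <= n)%N.
  by exists (maxn N1 N2); rewrite ?leq_maxl ?leq_maxr.
exists (H n); split => // F uF sF.
have h1 : nsq (Phi F - Phi (H n)) <= e / 4.
  have [_ h] := hF0 N1; apply/(le_trans _ (ltW hN1))/h => //; last exact: HF.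
  by move=> g /(HF N1 n n1) /sF.
have h2 : nsq (Phi (H n) - v) <= e / 4 by rewrite ltW // hN2.
by have := nsqD_le hH (Phi F - Phi (H n)) (Phi (H n) - v); rewrite addrA subrK; lra.
Qed.

Lemma net_vanishD phi psi : net_vanish phi -> net_vanish psi ->
  net_vanish (fun F => phi F + psi F).
Proof.
move=> h1 h2 e e0; have e2 : 0 < e / 2 by rewrite divr_gt0.
have [F0 [u0 k0]] := h1 _ e2; have [F1 [u1 k1]] := h2 _ e2.
have [F' [uF' s0 s1]] := exists_uniq_supset F0 F1.
exists F'; split => // F uF sF; apply: le_trans (le_normcD _ _) _.
have := k0 F uF (fun g gF => sF g (s0 g gF)); have := k1 F uF (fun g gF => sF g (s1 g gF)).
lra.
Qed.

Lemma net_vanishZ (c : R[i]) phi : net_vanish phi -> net_vanish (fun F => c * phi F).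
Proof.
move=> h e e0; have c1 : 0 < normc c + 1 by have := normc_ge0 c; lra.
have [F0 [u0 k0]] := h _ (divr_gt0 e0 c1); exists F0; split => // F uF sF.
rewrite Normc.normcM; have := k0 F uF sF; have := normc_ge0 c; have := normc_ge0 (phi F).
by rewrite ler_pdivlMr // => ? ? ?; nra.
Qed.

Lemma net_vanish_sum (I : Type) (r : seq I) (phi : I -> seq G -> R[i]) :
  (forall i, net_vanish (phi i)) -> net_vanish (fun F => \sum_(i <- r) phi i F).
Proof.
move=> h; elim: r => [|i r IH].
  by move=> e e0; exists [::]; split => // F _ _; rewrite big_nil Normc.normc0 ltW.
have -> : (fun F => \sum_(j <- i :: r) phi j F) = (fun F => phi i F + \sum_(j <- r) phi j F).
  by apply: functional_extensionality => F; rewrite big_cons.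
exact: net_vanishD.
Qed.

Lemma net_vanish_normc phi psi : (forall F, normc (psi F) = normc (phi F)) ->
  net_vanish phi -> net_vanish psi.
Proof. by move=> h hp e e0; have [F0 [u0 h0]] := hp e e0; exists F0; split => // F uF sF; rewrite h h0. Qed.

Lemma net_vanish_approx phi : (forall e : R, 0 < e -> exists2 psi, net_vanish psi &
  forall F, uniq F -> normc (phi F - psi F) <= e) -> net_vanish phi.
Proof.
move=> h e e0; have e2 : 0 < e / 2 by rewrite divr_gt0.
have [psi hpsi hd] := h _ e2; have [F0 [u0 k0]] := hpsi _ e2.
exists F0; split => // F uF sF; rewrite -(subrK (psi F) (phi F)).
by apply: le_trans (le_normcD _ _) _; have := hd F uF; have := k0 F uF sF; lra.
Qed.

Lemma net_vanish_const (c : R[i]) phi :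
  net_vanish phi -> net_vanish (fun F => c - phi F) -> c = 0.
Proof.
move=> h1 h2; apply: normc_le0_eq0 => e e0; have e2 : 0 < e / 2 by rewrite divr_gt0.
have [F0 [u0 k0]] := h1 _ e2; have [F1 [u1 k1]] := h2 _ e2.
have [F [uF s0 s1]] := exists_uniq_supset F0 F1.
have := k0 F uF s0; have := k1 F uF s1.
by have := le_normcD (c - phi F) (phi F); rewrite subrK; lra.
Qed.

End Nets.

Section ProjectiveRep.
Variables (R : realType) (V : lmodType R[i]) (ip : V -> V -> R[i]).
Hypothesis hH : is_hilbert_space ip.
Local Notation nsq := (nsq ip).
Variable G : groupType.
Variables (rho : G -> V -> V) (mu : G -> G -> R[i]).
Hypothesis rhoU : forall g, unitary ip (rho g).
Hypothesis mu1 : forall g h, `|mu g h| = 1.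
Hypothesis rhoM : forall g h x, rho g (rho h x) = mu g h *: rho (g * h)%g x.

Lemma rep_linear g : is_linear_op (rho g).
Proof. by case: (rhoU g). Qed.

Lemma rep_ip g x y : ip (rho g x) (rho g y) = ip x y.
Proof. by case: (rhoU g). Qed.

Lemma nsq_rep g x : nsq (rho g x) = nsq x.
Proof. by rewrite /Defs.nsq rep_ip. Qed.

Lemma normc_mult g h : normc (mu g h) = 1.
Proof. by apply: complexI; rewrite normc_normr mu1. Qed.

Lemma rep1 x : rho 1%g x = mu 1%g 1%g *: x.
Proof. by case: (rhoU 1%g) => _ _ /(_ x) [y <-]; rewrite rhoM mulg1. Qed.

Definition inv_mult g := mu g^-1 g * mu 1%g 1%g.

Lemma repV g x : rho g^-1 (rho g x) = inv_mult g *: x.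
Proof. by rewrite rhoM mulVg rep1 scalerA. Qed.

Lemma normc_inv_mult g : normc (inv_mult g) = 1.
Proof. by rewrite Normc.normcM !normc_mult mulr1. Qed.

Lemma repM_inv g h x : rho (g * h)%g x = (mu g h)^-1 *: rho g (rho h x).
Proof. by rewrite rhoM scalerA mulVf ?scale1r // normc1_neq0 // normc_mult. Qed.

Lemma bessel_vec_ge0 a : bessel_vec ip rho a -> exists B : R, 0 <= B /\
  forall x (s : seq G), uniq s -> \sum_(g <- s) normc (ip x (rho g a)) ^+ 2 <= B * nsq x.
Proof.
move=> [B hB]; exists `|B|; split => // x s us.
by apply: le_trans (hB x s us) _; rewrite ler_wpM2r ?(nsq_ge0 hH) ?ler_norm.
Qed.

Lemma bessel_family_bound k (z : 'I_k -> V) : (forall i, bessel_vec ip rho (z i)) ->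
  exists B : R, 0 <= B /\ forall x (s : seq G), uniq s ->
    \sum_(i < k) \sum_(g <- s) normc (ip x (rho g (z i))) ^+ 2 <= B * nsq x.
Proof.
move=> hz; have hB i := bessel_vec_ge0 (hz i).
pose B i := proj1_sig (constructive_indefinite_description _ (hB i)).
have hBi i := proj2_sig (constructive_indefinite_description _ (hB i)).
exists (\sum_(i < k) B i); split; first by apply: sumr_ge0 => i _; case: (hBi i).
by move=> x s us; rewrite mulr_suml; apply: ler_sum => i _; case: (hBi i) => _; apply.
Qed.

Lemma Thetak_closed_span k (z : 'I_k -> V) x : (forall i, bessel_vec ip rho (z i)) ->
  l2k_closed_span (Theta_range ip rho z) (Thetak ip rho z x).
Proof.
move=> /bessel_family_bound [B [_ hB]]; split; first by exists (B * nsq x); apply: hB.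
move=> e e0; exists 1%N, (fun _ => 1), (fun _ => Thetak ip rho z x); split; first by exists x.
move=> s _; rewrite big1 ?ltW // => i _; apply: big1 => g _.
by rewrite big_ord1 mul1r subrr Normc.normc0 expr0n.
Qed.

(* The synthesis operator [c |-> sum_g c g rho(g) b] is bounded: test its value
   [s] against itself and use the Bessel bound on [<s, rho(g) b>]. *)
Lemma bessel_synthesis b (Bb : R) (c : G -> R[i]) (F : seq G) : 0 <= Bb ->
  (forall x (s : seq G), uniq s -> \sum_(g <- s) normc (ip x (rho g b)) ^+ 2 <= Bb * nsq x) ->
  uniq F -> nsq (\sum_(g <- F) c g *: rho g b) <= (Bb + 1) * \sum_(g <- F) normc (c g) ^+ 2.
Proof.
move=> B0 hB uF; set s := \sum_(g <- F) _; set Cc := \sum_(g <- F) normc (c g) ^+ 2.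
set Q := \sum_(g <- F) normc (ip s (rho g b)) ^+ 2.
have t0 : 0 < Bb + 1 by lra.
have h1 : nsq s <= \sum_(g <- F) normc (c g) * normc (ip s (rho g b)).
  rewrite /Defs.nsq {2}/s (ip_sumr hH) Re_sum; apply: ler_sum => g _.
  rewrite (ipZr hH); apply: le_trans (Re_le_normc _) _.
  by rewrite Normc.normcM normc_conj (ip_conj hH) normc_conj.
have h2 : 2 * (\sum_(g <- F) normc (c g) * normc (ip s (rho g b))) <= (Bb + 1) * Cc + Q / (Bb + 1).
  rewrite mulr_sumr /Cc /Q mulr_sumr mulr_suml -big_split; apply: ler_sum => g _.
  exact: weighted_amgm.
have hQ : Q / (Bb + 1) <= Bb / (Bb + 1) * nsq s by rewrite mulrAC ler_pM2r ?invr_gt0 ?hB.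
have hq : Bb / (Bb + 1) <= 1 by rewrite ler_pdivrMr //; lra.
have hq0 : 0 <= Bb / (Bb + 1) by rewrite divr_ge0 // ltW.
have hC : 0 <= Cc by apply: sumr_ge0 => g _; apply: sqr_ge0.
by have := nsq_ge0 hH s; nra.
Qed.

Lemma bessel_tail a (Ba : R) x :
  (forall x (s : seq G), uniq s -> \sum_(g <- s) normc (ip x (rho g a)) ^+ 2 <= Ba * nsq x) ->
  forall e : R, 0 < e -> exists F0, uniq F0 /\ forall D : seq G, uniq D ->
    (forall g, g \in D -> g \notin F0) -> \sum_(g <- D) normc (ip x (rho g a)) ^+ 2 <= e.
Proof.
move=> hB e e0.
pose E r := exists2 s : seq G, uniq s & r = \sum_(g <- s) normc (ip x (rho g a)) ^+ 2.
have E0 : E 0 by exists [::]; rewrite ?big_nil.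
have EM r : E r -> r <= Ba * nsq x by case=> s us ->; apply: hB.
have [m [hub had]] := bounded_sup_approx E0 EM.
have [r [F0 u0 ->] lt] := had e e0.
exists F0; split => // D uD dis.
have uc : uniq (F0 ++ D) by rewrite cat_uniq u0 uD andbT; apply/hasPn => g /dis.
by have := hub _ (ex_intro2 _ _ (F0 ++ D) uc erefl); rewrite big_cat /=; lra.
Qed.

Definition frame_sum a b (F : seq G) x := \sum_(g <- F) ip x (rho g a) *: rho g b.

Lemma frame_sum_cauchy a b x : bessel_vec ip rho a -> bessel_vec ip rho b ->
  net_cauchy ip (fun F => frame_sum a b F x).
Proof.
move=> /bessel_vec_ge0 [Ba [Ba0 hBa]] /bessel_vec_ge0 [Bb [Bb0 hBb]] e e0.
have k0 : 0 < 4 * (Bb + 1) by lra.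
have [F0 [u0 hF0]] := bessel_tail x hBa (divr_gt0 e0 k0).
exists F0; split => // F F' uF uF' sF sF'.
rewrite /frame_sum (big_split_subset _ u0 uF sF) (big_split_subset _ u0 uF' sF').
rewrite opprD addrACA subrr add0r.
have tail_small D : D = [seq g <- F | g \notin F0] \/ D = [seq g <- F' | g \notin F0] ->
    nsq (\sum_(g <- D) ip x (rho g a) *: rho g b) <= e / 4.
  move=> DF; have uD : uniq D by case: DF => ->; apply: filter_uniq.
  have dD g : g \in D -> g \notin F0 by case: DF => -> ; rewrite mem_filter => /andP [].
  apply: le_trans (bessel_synthesis _ Bb0 hBb uD) _.
  have -> : e / 4 = (Bb + 1) * (e / (4 * (Bb + 1))) by field; lra.
  by rewrite ler_wpM2l ?hF0 //; lra.
apply: le_trans (nsqD_le hH _ _) _; rewrite (nsqN hH).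
by have := tail_small _ (or_introl erefl); have := tail_small _ (or_intror erefl); lra.
Qed.

Definition frame_op a b x : V := epsilon (inhabits 0) (net_lim ip (fun F => frame_sum a b F x)).

Section FrameOperator.
Variables a b : V.
Hypotheses (ha : bessel_vec ip rho a) (hb : bessel_vec ip rho b).
Local Notation S := (frame_sum a b).
Local Notation T := (frame_op a b).

Lemma frame_op_lim x : net_lim ip (fun F => S F x) (T x).
Proof. exact: (epsilon_spec (inhabits 0) _ (net_cauchy_lim hH (frame_sum_cauchy x ha hb))). Qed.

Lemma frame_sum_linear F : is_linear_op (S F).
Proof.
move=> al x y; rewrite /frame_sum scaler_sumr -big_split; apply: eq_bigr => g _.
by rewrite (ip_linear hH) scalerDl scalerA.
Qed.

Lemma frame_op_linear : is_linear_op T.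
Proof.
move=> al x y; apply: (net_lim_unique hH (frame_op_lim (al *: x + y))).
rewrite (_ : (fun F => _) = fun F => al *: S F x + S F y); last first.
  by apply: functional_extensionality => F; rewrite frame_sum_linear.
exact: (net_limDZ hH al (frame_op_lim x) (frame_op_lim y)).
Qed.

Lemma frame_op_bounded : exists M : R, forall x, nsq (T x) <= M * nsq x.
Proof.
have [Ba [Ba0 hBa]] := bessel_vec_ge0 ha; have [Bb [Bb0 hBb]] := bessel_vec_ge0 hb.
exists (2 * ((Bb + 1) * Ba)) => x.
apply/ler_addgt0Pr => e e0; have e2 : 0 < e / 2 by rewrite divr_gt0.
have [F0 [u0 h0]] := frame_op_lim x e2.
have h1 := h0 F0 u0 (fun g gF => gF); rewrite -(nsqN hH) opprB in h1.
have h2 := bessel_synthesis (fun g => ip x (rho g a)) Bb0 hBb u0.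
have h3 : (Bb + 1) * \sum_(g <- F0) normc (ip x (rho g a)) ^+ 2 <= (Bb + 1) * (Ba * nsq x).
  by rewrite ler_wpM2l ?hBa //; lra.
have := nsqD_le hH (T x - S F0 x) (S F0 x); rewrite subrK.
by rewrite /frame_sum in h1 *; lra.
Qed.

Lemma frame_sum_shift h F x :
  S (map (fun g => (h * g)%g) F) (rho h x) = rho h (S F x).
Proof.
rewrite /frame_sum big_map (linear_op_sum (rep_linear h)); apply: eq_bigr => g _.
rewrite (linear_opZ (rep_linear h)) rhoM repM_inv (ipZr hH) rep_ip.
rewrite normc1_invJ ?normc_mult // scalerA; congr (_ *: _); ring.
Qed.

Lemma frame_op_comm h x : T (rho h x) = rho h (T x).
Proof.
apply: (net_lim_unique hH (frame_op_lim (rho h x))) => e e0.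
have [F0 [u0 h0]] := frame_op_lim x e0.
exists (map (fun g => (h * g)%g) F0); split; first by rewrite map_inj_uniq //; apply: mulgI.
move=> F uF sF; set F' := map (fun g => (h^-1 * g)%g) F.
have -> : F = map (fun g => (h * g)%g) F'.
  by rewrite -map_comp -[LHS]map_id; apply: eq_map => g /=; rewrite mulVKg.
rewrite frame_sum_shift -(linear_opB (rep_linear h)) nsq_rep h0 //.
  by rewrite map_inj_uniq //; apply: mulgI.
by move=> g gF0; apply/mapP; exists (h * g)%g; rewrite ?mulKg ?sF ?map_f.
Qed.

Lemma frame_op_commutant : commutant ip (range_op rho) T.
Proof.
split; first by split; [exact: frame_op_linear | exact: frame_op_bounded].
by move=> A [g ->] x; apply: frame_op_comm.
Qed.

Lemma frame_op_ip_lim x y : net_vanish (fun F => ip (T x) y - ip (S F x) y).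
Proof.
move=> e e0; have y1 : 0 < ipnorm ip y + 1 by have := ipnorm_ge0 ip y; lra.
set d := e / (ipnorm ip y + 1).
have d0 : 0 < d by rewrite divr_gt0.
have [F0 [u0 h0]] := frame_op_lim x (exprn_gt0 2 d0).
exists F0; split => // F uF sF.
rewrite -(ipBl hH); apply: le_trans (normc_ip_le hH _ _) _.
have : ipnorm ip (T x - S F x) <= d.
  by apply: (ipnorm_le hH); [exact: ltW | rewrite -(nsqN hH) opprB; apply: h0].
have hd : d * (ipnorm ip y + 1) = e by rewrite /d divfK // lt0r_neq0.
by have := ipnorm_ge0 ip y; have := ipnorm_ge0 ip (T x - S F x); nra.
Qed.

End FrameOperator.

Lemma frame_op_diag_ge a x g : bessel_vec ip rho a ->
  normc (ip x (rho g a)) ^+ 2 <= complex.Re (ip (frame_op a a x) x).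
Proof.
move=> ha; apply/ler_addgt0Pr => e e0.
have [F0 [u0 h0]] := frame_op_ip_lim ha ha x x e0.
have [F [uF s0 s1]] := exists_uniq_supset F0 [:: g].
have gF : g \in F by rewrite s1 ?mem_head.
have eS : complex.Re (ip (frame_sum a a F x) x) = \sum_(g' <- F) normc (ip x (rho g' a)) ^+ 2.
  rewrite /frame_sum (ip_suml hH) Re_sum; apply: eq_bigr => g' _.
  by rewrite (ipZl hH) [ip (rho g' a) x](ip_conj hH) -normc_sqr.
have hg : normc (ip x (rho g a)) ^+ 2 <= \sum_(g' <- F) normc (ip x (rho g' a)) ^+ 2.
  by rewrite (bigD1_seq g) //= lerDl sumr_ge0 // => g' _; apply: sqr_ge0.
have := Re_le_normc (ip (frame_sum a a F x) x - ip (frame_op a a x) x).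
by rewrite ReD ReN -normcN opprB; have := h0 F uF s0; lra.
Qed.

End ProjectiveRep.

Section OrbitProjection.
Variables (R : realType) (V : lmodType R[i]) (ip : V -> V -> R[i]).
Hypothesis hH : is_hilbert_space ip.
Variable G : groupType.
Variables (sigma : G -> V -> V) (mu : G -> G -> R[i]).
Hypothesis sigmaU : forall g, unitary ip (sigma g).
Hypothesis mu1 : forall g h, `|mu g h| = 1.
Hypothesis sigmaM : forall g h x, sigma g (sigma h x) = mu g h *: sigma (g * h)%g x.
Variables (k : nat) (xi : 'I_k -> V).
Local Notation Vk := {ffun 'I_k -> V}.
Local Notation ipk := (ipk ip (k := k)).
Let hHk : is_hilbert_space ipk := ipk_hilbert hH k.

Definition orbit_set : Vk -> Prop := lift_pred (orbitk sigma xi).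

Lemma orbit_setP w : orbit_set w <-> exists g, w = [ffun i => sigma g (xi i)].
Proof.
split=> [[g hg]|[g ->]].
  by exists g; apply/ffunP => i; rewrite ffunE; exact: (congr1 (fun f => f i) hg).
by exists g; apply: functional_extensionality => i; rewrite ffunE.
Qed.

Local Notation K := (cspan ipk orbit_set).

Definition orbit_proj (z : Vk) : Vk :=
  epsilon (inhabits 0) (fun p => K p /\ forall v, orbit_set v -> ipk (z - p) v = 0).

Lemma orbit_proj_spec z : K (orbit_proj z) /\ forall v, orbit_set v -> ipk (z - orbit_proj z) v = 0.
Proof.
exact: (epsilon_spec (inhabits 0) _ (exists_orth_proj hHk orbit_set z)).
Qed.

Lemma orbit_proj_unique z p : K p -> (forall v, orbit_set v -> ipk (z - p) v = 0) ->
  orbit_proj z = p.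
Proof.
move=> Kp op; have [Kq oq] := orbit_proj_spec z.
have Kd : K (orbit_proj z - p) by apply: (cspanB hHk).
apply/eqP; rewrite -subr_eq0; apply/eqP; apply: (ip_eq0 hHk).
have E : (z - p) - (z - orbit_proj z) = orbit_proj z - p by rewrite opprB addrC addrA subrK.
by rewrite -{1}E (ipBl hHk) (orth_cspan hHk op Kd) (orth_cspan hHk oq Kd) subrr.
Qed.

Lemma orbit_proj_linear : is_linear_op orbit_proj.
Proof.
move=> a z z'; have [K1 o1] := orbit_proj_spec z; have [K2 o2] := orbit_proj_spec z'.
apply: orbit_proj_unique; first by apply: (cspanD hHk) => //; apply: (cspanZ hHk).
move=> v Sv.
have -> : a *: z + z' - (a *: orbit_proj z + orbit_proj z') =
          a *: (z - orbit_proj z) + (z' - orbit_proj z') by rewrite scalerBr opprD addrACA.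
by rewrite (ip_linear hHk) o1 // o2 // mulr0 addr0.
Qed.

Lemma orbit_proj_id z : K z -> orbit_proj z = z.
Proof. by move=> Kz; apply: orbit_proj_unique => // v _; rewrite subrr (ip0l hHk). Qed.

Lemma orbit_proj_contraction z : nsq ipk (orbit_proj z) <= nsq ipk z.
Proof.
have [Kp op] := orbit_proj_spec z.
have := nsqD hHk (orbit_proj z) (z - orbit_proj z); rewrite addrC subrK => ->.
rewrite (ip_conj hHk) (orth_cspan hHk op Kp) conjC0 /= mulr0 addr0.
by have := nsq_ge0 hHk (z - orbit_proj z); lra.
Qed.

Definition diag_rep g (z : Vk) : Vk := [ffun i => sigma g (z i)].

Lemma diag_rep_linear g : is_linear_op (diag_rep g).
Proof. by move=> a x y; apply/ffunP => i; rewrite !ffunE (rep_linear sigmaU). Qed.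

Lemma diag_rep_ip g x y : ipk (diag_rep g x) (diag_rep g y) = ipk x y.
Proof. by apply: eq_bigr => i _; rewrite !ffunE (rep_ip sigmaU). Qed.

Lemma diag_rep_orbit g v : orbit_set v -> lspan orbit_set (diag_rep g v).
Proof.
move=> /orbit_setP [h ->].
have -> : diag_rep g [ffun i => sigma h (xi i)] = mu g h *: [ffun i => sigma (g * h)%g (xi i)].
  by apply/ffunP => i; rewrite !ffunE sigmaM.
by apply/lspanZ/lspan_mem/orbit_setP; exists (g * h)%g.
Qed.

Lemma cspan_diag_rep g z : K z -> K (diag_rep g z).
Proof.
move: z; apply: (cspan_linear_image (diag_rep_linear g)); last exact: diag_rep_orbit.
by move=> x; rewrite /nsq diag_rep_ip.
Qed.

Lemma diag_rep_orth g w : (forall v, orbit_set v -> ipk w v = 0) ->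
  forall v, orbit_set v -> ipk (diag_rep g w) v = 0.
Proof.
move=> hw v /orbit_setP [h ->].
have -> : [ffun i => sigma h (xi i)] =
          (mu g (g^-1 * h)%g)^-1 *: diag_rep g [ffun i => sigma (g^-1 * h)%g (xi i)].
  by apply/ffunP => i; rewrite !ffunE -(repM_inv mu1 sigmaM) mulVKg.
by rewrite (ipZr hHk) diag_rep_ip hw ?mulr0 //; apply/orbit_setP; exists (g^-1 * h)%g.
Qed.

Lemma orbit_proj_diag_rep g z : orbit_proj (diag_rep g z) = diag_rep g (orbit_proj z).
Proof.
have [Kp op] := orbit_proj_spec z.
apply: orbit_proj_unique; first exact: cspan_diag_rep.
by rewrite -(linear_opB (diag_rep_linear g)); apply: diag_rep_orth.
Qed.

Definition coord_vec (j : 'I_k) (x : V) : Vk := [ffun l => if l == j then x else 0].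

Lemma coord_vecDZ j a x y : coord_vec j (a *: x + y) = a *: coord_vec j x + coord_vec j y.
Proof.
by apply/ffunP => l; rewrite !ffunE; case: (l == j); rewrite ?scaler0 ?addr0.
Qed.

Lemma nsq_coord_vec j x : nsq ipk (coord_vec j x) = nsq ip x.
Proof.
rewrite nsq_ipk (bigD1 j) //= big1 ?addr0; first by rewrite ffunE eqxx.
by move=> l /negPf hl; rewrite ffunE hl (nsq0 hH).
Qed.

Lemma sum_coord_vec (z : Vk) : \sum_(j < k) coord_vec j (z j) = z.
Proof.
apply/ffunP => i; rewrite sum_ffunE (bigD1 i) //= big1 ?addr0; first by rewrite ffunE eqxx.
by move=> l hl; rewrite ffunE eq_sym (negPf hl).
Qed.

Definition proj_entry (i j : 'I_k) (x : V) : V := orbit_proj (coord_vec j x) i.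

Lemma orbit_proj_entries z i : orbit_proj z i = \sum_(j < k) proj_entry i j (z j).
Proof. by rewrite -{1}(sum_coord_vec z) (linear_op_sum orbit_proj_linear) sum_ffunE. Qed.

Lemma proj_entry_commutant i j : commutant ip (range_op sigma) (proj_entry i j).
Proof.
split.
  split=> [a x y|]; first by rewrite /proj_entry coord_vecDZ orbit_proj_linear !ffunE.
  exists 1 => x; rewrite mul1r -(nsq_coord_vec j x).
  exact: le_trans (nsq_ipk_ge hH _ _) (orbit_proj_contraction _).
move=> A [g ->] x; rewrite /proj_entry.
have -> : coord_vec j (sigma g x) = diag_rep g (coord_vec j x).
  by apply/ffunP => l; rewrite !ffunE; case: (l == j); rewrite ?(linear_op0 (rep_linear sigmaU g)).
by rewrite orbit_proj_diag_rep ffunE.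
Qed.

(* Bicommutant operators commute with every [proj_entry i j], hence with [orbit_proj]. *)
Lemma cspan_orbit_bicommutant (T : V -> V) :
  commutant ip (commutant ip (range_op sigma)) T ->
  forall z, K z -> K [ffun i => T (z i)].
Proof.
move=> [[Tlin _] Tcomm] z Kz.
set Tz := [ffun i => T (z i)].
suff PTz : orbit_proj Tz = Tz by rewrite -PTz; case: (orbit_proj_spec Tz).
apply/ffunP => i; rewrite orbit_proj_entries ffunE -[in RHS](orbit_proj_id Kz) orbit_proj_entries.
rewrite (linear_op_sum Tlin); apply: eq_bigr => j _.
by rewrite ffunE Tcomm //; apply: proj_entry_commutant.
Qed.

Lemma cspan_orbit_base : K [ffun i => xi i].
Proof.
have n0 := normc1_neq0 (normc_mult mu1 1%g 1%g).
have -> : [ffun i => xi i] = (mu 1%g 1%g)^-1 *: [ffun i => sigma 1%g (xi i)].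
  by apply/ffunP => i; rewrite !ffunE (rep1 sigmaU sigmaM) scalerA mulVf // scale1r.
by apply/(cspanZ hHk)/(cspan_mem hHk)/orbit_setP; exists 1%g.
Qed.

End OrbitProjection.

Section Residual.
Variables (R : realType) (V : lmodType R[i]) (ip : V -> V -> R[i]).
Hypothesis hH : is_hilbert_space ip.
Local Notation nsq := (nsq ip).
Variable G : groupType.
Variables (pi sigma : G -> V -> V) (mu mus : G -> G -> R[i]).
Hypothesis piU : forall g, unitary ip (pi g).
Hypothesis mu1 : forall g h, `|mu g h| = 1.
Hypothesis piM : forall g h x, pi g (pi h x) = mu g h *: pi (g * h)%g x.
Hypothesis sigmaU : forall g, unitary ip (sigma g).
Hypothesis mus1 : forall g h, `|mus g h| = 1.
Hypothesis sigmaM : forall g h x, sigma g (sigma h x) = mus g h *: sigma (g * h)%g x.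
Hypothesis pi_sigma : commutant_pair ip pi sigma.
Hypothesis dense : bessel_dense ip pi.
Variables (k : nat) (xi eta : 'I_k -> V).
Hypothesis xiB : forall i, bessel_vec ip pi (xi i).
Hypothesis Theta_sub : forall x, l2k_closed_span (Theta_range ip pi xi) (Thetak ip pi eta x).

Local Notation Vk := {ffun 'I_k -> V}.
Local Notation ipk := (ipk ip (k := k)).
Let hHk : is_hilbert_space ipk := ipk_hilbert hH k.
Local Notation K := (cspan ipk (orbit_set sigma xi)).
Local Notation P := (orbit_proj ip sigma xi).

Definition eta_vec : Vk := [ffun i => eta i].

Definition residual : Vk := eta_vec - P eta_vec.

Lemma residual_orth z : K z -> ipk residual z = 0.
Proof. by have [_ o] := orbit_proj_spec hH sigma xi eta_vec; apply: (orth_cspan hHk o). Qed.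

Lemma commutant_residual_orth (T : V -> V) z : commutant ip (range_op pi) T -> K z ->
  \sum_(i < k) ip (T (z i)) (residual i) = 0.
Proof.
move=> /pi_sigma T2 Kz.
have := residual_orth (cspan_orbit_bicommutant hH sigmaU mus1 sigmaM T2 Kz).
move=> h; have -> : \sum_(i < k) ip (T (z i)) (residual i) = (ipk residual [ffun i => T (z i)])^*.
  by rewrite /ipk rmorph_sum /=; apply: eq_bigr => i _; rewrite -(ip_conj hH) !ffunE.
by rewrite h conjC0.
Qed.

(* With [pi(g)^* = c_g pi(g^-1)], the pairing [sum_i <frame_sum a b F (z i), residual i>]
   becomes the conjugate of a pairing of [Theta_z(a)] against fixed coefficients. *)
Definition residual_coef b (i : 'I_k) (g : G) : R[i] :=
  inv_mult mu g * ip (residual i) (pi g b).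

Definition residual_pairing b (z : 'I_k -> V) (F : seq G) (x : V) : R[i] :=
  \sum_(i < k) \sum_(g <- F) Thetak ip pi z x i g^-1 * residual_coef b i g.

Lemma frame_sum_residual b a z F :
  \sum_(i < k) ip (frame_sum ip pi a b F (z i)) (residual i) = (residual_pairing b z F a)^*.
Proof.
rewrite /residual_pairing rmorph_sum; apply: eq_bigr => i _.
rewrite /frame_sum (ip_suml hH) rmorph_sum; apply: eq_bigr => g _.
rewrite (ipZl hH) /residual_coef /Thetak /Theta -(rep_ip piU g^-1 (z i) (pi g a)).
by rewrite (repV piU piM) (ipZr hH) !rmorphM /= -!(ip_conj hH); ring.
Qed.

Lemma residual_pairingB b z F x y :
  residual_pairing b z F (x - y) = residual_pairing b z F x - residual_pairing b z F y.
Proof.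
rewrite /residual_pairing -sumrB; apply: eq_bigr => i _; rewrite -sumrB.
by apply: eq_bigr => g _; rewrite /Thetak /Theta (ipBl hH) mulrBl.
Qed.

(* Weighted AM-GM on each term, then the Bessel bound of [b] tested on [residual i]. *)
Lemma residual_error_small b (e : R) : bessel_vec ip pi b -> 0 < e -> exists2 delta : R, 0 < delta &
  forall (d : 'I_k -> G -> R[i]) (F : seq G), uniq F ->
    \sum_(i < k) \sum_(u <- [seq g^-1 | g <- F]%g) normc (d i u) ^+ 2 <= delta ->
    normc (\sum_(i < k) \sum_(g <- F) d i g^-1%g * residual_coef b i g) <= e.
Proof.
move=> /(bessel_vec_ge0 hH) [Bb [Bb0 hBb]] e0.
set Vb := \sum_(i < k) Bb * nsq (residual i).
have Vb0 : 0 <= Vb by apply: sumr_ge0 => i _; rewrite mulr_ge0 // (nsq_ge0 hH).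
set t := (Vb + 1) / e.
have t0 : 0 < t by rewrite divr_gt0 //; lra.
exists (e / t) => [|d F uF hd]; first by rewrite divr_gt0.
set A := fun i g => normc (d i g^-1%g); set B := fun i g => normc (ip (residual i) (pi g b)).
have h1 : normc (\sum_(i < k) \sum_(g <- F) d i g^-1%g * residual_coef b i g) <=
    \sum_(i < k) \sum_(g <- F) A i g * B i g.
  apply: le_trans (normc_sum _ _) _; apply: ler_sum => i _.
  apply: le_trans (normc_sum _ _) _; apply: ler_sum => g _.
  by rewrite /residual_coef Normc.normcM [normc (inv_mult _ _ * _)]Normc.normcM (normc_inv_mult mu1) mul1r.
have h2 i : 2 * \sum_(g <- F) A i g * B i g <=
    t * \sum_(u <- [seq g^-1 | g <- F]%g) normc (d i u) ^+ 2 + Bb * nsq (residual i) / t.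
  rewrite big_map mulr_sumr; apply: le_trans (ler_sum _ (fun g _ => weighted_amgm _ _ t0)) _.
  by rewrite big_split /= -mulr_sumr -mulr_suml lerD2l ler_pM2r ?invr_gt0 ?hBb.
have h3 : 2 * \sum_(i < k) \sum_(g <- F) A i g * B i g <=
    t * \sum_(i < k) \sum_(u <- [seq g^-1 | g <- F]%g) normc (d i u) ^+ 2 + Vb / t.
  rewrite mulr_sumr; apply: le_trans (ler_sum _ (fun i _ => h2 i)) _.
  by rewrite big_split /= -mulr_sumr -mulr_suml.
have h4 : t * \sum_(i < k) \sum_(u <- [seq g^-1 | g <- F]%g) normc (d i u) ^+ 2 <= e.
  by apply: le_trans (ler_wpM2l (ltW t0) hd) _; rewrite mulrC divfK ?lt0r_neq0.
have h5 : Vb / t <= e by rewrite /t invf_div mulrA ler_pdivrMr; [nra | lra].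
lra.
Qed.

Lemma frame_op_residual_lim a b z : bessel_vec ip pi a -> bessel_vec ip pi b ->
  net_vanish (fun F => \sum_(i < k) ip (frame_op ip pi a b (z i)) (residual i)
                       - (residual_pairing b z F a)^*).
Proof.
move=> ha hb; under [fun F => _]functional_extensionality => F do
  rewrite -frame_sum_residual -sumrB.
by apply: net_vanish_sum => i; apply: frame_op_ip_lim.
Qed.

Lemma residual_pairing_xi_bessel a b : bessel_vec ip pi a -> bessel_vec ip pi b ->
  net_vanish (fun F => residual_pairing b xi F a).
Proof.
move=> ha hb; have := frame_op_residual_lim xi ha hb.
have -> : \sum_(i < k) ip (frame_op ip pi a b (xi i)) (residual i) = 0.
  have := commutant_residual_orth (frame_op_commutant hH piU mu1 piM ha hb)
            (cspan_orbit_base hH sigmaU mus1 sigmaM xi).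
  by under eq_bigr => i _ do rewrite ffunE.
by apply: net_vanish_normc => F; rewrite sub0r normcN normc_conj.
Qed.

Lemma residual_pairing_xi b x : bessel_vec ip pi b ->
  net_vanish (fun F => residual_pairing b xi F x).
Proof.
move=> hb; have [Bx [Bx0 hBx]] := bessel_family_bound hH xiB.
apply: net_vanish_approx => e e0.
have [delta delta0 small] := residual_error_small hb e0.
have Bx1 : 0 < Bx + 1 by lra.
have [a [ha hxa]] := dense x (divr_gt0 delta0 Bx1).
exists (fun F => residual_pairing b xi F a); first exact: residual_pairing_xi_bessel.
move=> F uF; rewrite -residual_pairingB; apply: (small (Thetak ip pi xi (x - a))) => //.
apply: le_trans (hBx _ _ _) _; first by rewrite map_inj_uniq //; apply: invg_inj.
rewrite ltr_pdivlMr // in hxa; have := nsq_ge0 hH (x - a); nra.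
Qed.

Lemma residual_pairing_eta b x : bessel_vec ip pi b ->
  net_vanish (fun F => residual_pairing b eta F x).
Proof.
move=> hb; apply: net_vanish_approx => e e0.
have [delta delta0 small] := residual_error_small hb e0.
have [_ /(_ _ delta0) [n [c [f [hf hs]]]]] := Theta_sub x.
pose xj j := proj1_sig (constructive_indefinite_description _ (hf j)).
have hxj j : f j = Thetak ip pi xi (xj j).
  exact: proj2_sig (constructive_indefinite_description _ (hf j)).
exists (fun F => \sum_(j < n) c j * residual_pairing b xi F (xj j)).
  by apply: net_vanish_sum => j; apply/net_vanishZ/residual_pairing_xi.
move=> F uF.
have -> : \sum_(j < n) c j * residual_pairing b xi F (xj j) =
    \sum_(i < k) \sum_(g <- F) (\sum_(j < n) c j * f j i g^-1%g) * residual_coef b i g.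
  rewrite /residual_pairing; under eq_bigr => j _ do rewrite mulr_sumr.
  rewrite exchange_big; apply: eq_bigr => i _; under eq_bigr => j _ do rewrite mulr_sumr.
  rewrite exchange_big; apply: eq_bigr => g _; rewrite mulr_suml.
  by apply: eq_bigr => j _; rewrite hxj mulrA.
rewrite /residual_pairing -sumrB.
under eq_bigr => i _ do (rewrite -sumrB; under eq_bigr => g _ do rewrite -mulrBl).
apply: (small (fun i u => Thetak ip pi eta x i u - \sum_(j < n) c j * f j i u)) => //.
by apply: hs; rewrite map_inj_uniq //; apply: invg_inj.
Qed.

Lemma frame_op_eta_residual a b : bessel_vec ip pi a -> bessel_vec ip pi b ->
  \sum_(i < k) ip (frame_op ip pi a b (eta i)) (residual i) = 0.
Proof.
move=> ha hb; apply: (net_vanish_const (phi := fun F => (residual_pairing b eta F a)^*)).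
  by apply: net_vanish_normc (residual_pairing_eta a hb) => F; rewrite normc_conj.
exact: frame_op_residual_lim.
Qed.

(* For [T = frame_op a a], [<T y, y>] dominates every [|<y, pi(g) a>|^2]; the
   [P eta_vec] part of [residual] is handled by [commutant_residual_orth]. *)
Lemma residual_orth_bessel i a : bessel_vec ip pi a -> ip (residual i) a = 0.
Proof.
move=> ha; set T := frame_op ip pi a a.
have Tlin : is_linear_op T := frame_op_linear hH ha ha.
have hT : \sum_(j < k) ip (T (residual j)) (residual j) = 0.
  have eY j : residual j = eta j - P eta_vec j by rewrite !ffunE.
  transitivity (\sum_(j < k) ip (T (eta j)) (residual j) -
                \sum_(j < k) ip (T (P eta_vec j)) (residual j)).
    by rewrite -sumrB; apply: eq_bigr => j _; rewrite {1}eY (linear_opB Tlin) (ipBl hH).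
  rewrite frame_op_eta_residual // commutant_residual_orth ?subrr //.
    exact: frame_op_commutant.
  by case: (orbit_proj_spec hH sigma xi eta_vec).
have hsum : \sum_(j < k) normc (ip (residual j) (pi 1%g a)) ^+ 2 = 0.
  apply/eqP; rewrite eq_le sumr_ge0 ?andbT => [|j _]; last exact: sqr_ge0.
  apply: le_trans (ler_sum _ (fun j _ => frame_op_diag_ge hH (residual j) 1%g ha)) _.
  by rewrite -Re_sum hT.
move/eqP: (@psumr_eq0P _ _ _ _ (fun j _ => sqr_ge0 _) hsum i isT).
rewrite sqrf_eq0 => /eqP /Normc.eq0_normc; rewrite (rep1 piU piM) (ipZr hH) => /eqP.
by rewrite mulf_eq0 conjC_eq0 (negPf (normc1_neq0 (normc_mult mu1 _ _))) => /eqP.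
Qed.

Lemma residual_eq0 : residual = 0.
Proof.
suff res0 i : residual i = 0 by apply/ffunP => i; rewrite res0 ffunE.
set y := residual i.
apply: (ipnorm_eq0 hH); apply/eqP; rewrite eq_le ipnorm_ge0 andbT.
apply/ler_addgt0Pr => d d0; rewrite add0r.
have [a [ha hya]] := dense y (exprn_gt0 2 d0).
have n1 : ipnorm ip (y - a) <= d by apply: (ipnorm_le hH); rewrite ltW.
have h1 : ipnorm ip y ^+ 2 <= ipnorm ip y * d.
  rewrite (ipnorm_sqr hH) /Defs.nsq -[X in ip y X](subrK a) (ipDr hH) (residual_orth_bessel i ha) addr0. apply: le_trans (Re_le_normc _) _; apply: le_trans (normc_ip_le hH _ _) _.
  by rewrite ler_wpM2l ?ipnorm_ge0.
by have := ipnorm_ge0 ip y; nra.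
Qed.

Lemma eta_in_orbit_cspan : K eta_vec.
Proof.
have [Kp _] := orbit_proj_spec hH sigma xi eta_vec.
by move/eqP: residual_eq0; rewrite subr_eq0 => /eqP ->.
Qed.

Lemma orbit_cspan_sub v :
  Hk_closed_span ip (orbitk sigma eta) v -> Hk_closed_span ip (orbitk sigma xi) v.
Proof.
move=> /Hk_closed_spanE hv; apply/Hk_closed_spanE; apply: (cspan_sub hHk) hv => w [g hg].
have -> : w = diag_rep sigma g eta_vec.
  by apply/ffunP => i; rewrite !ffunE; exact: (congr1 (fun f => f i) hg).
exact: (cspan_diag_rep sigmaU sigmaM g eta_in_orbit_cspan).
Qed.

End Residual.

Unset Implicit Arguments. Set Strict Implicit.
Theorem lemma3p6 (R : realType) (V : lmodType R[i]) (ip : V -> V -> R[i])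
  (G : groupType) (pi sigma : G -> V -> V) (k : nat) (xi eta : 'I_k -> V) :
  is_hilbert_space ip ->
  (exists f : G -> nat, injective f) ->
  proj_unitary_rep ip pi -> proj_unitary_rep ip sigma ->
  commutant_pair ip pi sigma ->
  bessel_dense ip pi ->
  (forall i, bessel_vec ip pi (xi i)) ->
  (forall i, bessel_vec ip pi (eta i)) ->
  (forall y, l2k_closed_span (Theta_range ip pi xi) y <->
             l2k_closed_span (Theta_range ip pi eta) y) ->
  (forall v, Hk_closed_span ip (orbitk sigma xi) v <->
             Hk_closed_span ip (orbitk sigma eta) v).
Proof.
move=> hH _ [piU [mu [mu1 piM]]] [sigmaU [mus [mus1 sigmaM]]] pi_sigma dense xiB etaB hTheta v.
split; apply: (orbit_cspan_sub hH piU mu1 piM sigmaU mus1 sigmaM pi_sigma dense) => // x.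
- by apply/hTheta/Thetak_closed_span.
- by apply/hTheta/Thetak_closed_span.
Qed.
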